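(* Run the mechanism BFM-SWM described in the context with $\ell=2$ and arbitrary $B>0$, $\alpha>1$, $\beta>1$, $\epsilon>0$, with all sellers behaving truthfully, and let $S_{i,t}$ ($i\in\{1,2\}$, $t\in[M]$), $\rho_M$, $u^*$ be as defined in the context. Let $O$ be an optimal solution of $\max\{v(S)-c(S): S\subseteq\mathcal{N},\ c(S)\le B\}$. Then $$v(O)-2\beta\cdot c(O)\ \le\ 2\rho_M+2\sum_{i=1}^{2}\sum_{t=1}^{M}v(S_{i,t})+2v(u^* ).$$
   Context: Setting. $\mathcal{N}$ is a finite set of $n$ sellers. The valuation $v:2^{\mathcal{N}}\to\mathbb{R}_{\ge 0}$ satisfies $v(\emptyset)=0$ and is submodular (for $X\subseteq Y\subseteq\mathcal{N}$ and $u\notin Y$, $v(u\mid Y)\le v(u\mid X)$), not necessarily monotone, where $v(S\mid T)=v(S\cup T)-v(T)$, $v(u\mid T)=v(\{u\}\mid T)$. Each seller $u$ has a private cost $c(u)\ge 0$; $c(X)=\sum_{u\in X}c(u)$, $p(X)=\sum_{u\in X}p(u)$. $B>0$ is the budget, $[\ell]=\{1,\dots,\ell\}$. Sellers behave truthfully: a seller $u$ offered price $q$ accepts iff $c(u)\le q$. Mechanism BFM-SWM (inputs $B$, $\alpha>1$, $\beta>1$, $\epsilon>0$, $\ell\in\{1,2\}$): 1. Offer every seller the price $B$; let $R$ be the set of sellers who accept, and set $p(u)=B$ for $u\in R$. 2. Set $t=0$, $\rho_0=\epsilon/\alpha$, $u^*=\emptyset$ ($u^*$ is a set of at most one seller),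 and $S_{i,0}=\emptyset$ for $i\in[\ell]$. 3. Repeat rounds: set $t\leftarrow t+1$, $\rho_t=\alpha\rho_{t-1}$, $S_{i,t}=\emptyset$ for all $i\in[\ell]$. Process the sellers $u\in R\setminus(\bigcup_{i=1}^{\ell}S_{i,t-1}\cup u^* )$ one at a time in a fixed order. For each such $u$: pick $j\in\arg\max_{i\in[\ell]}v(u\mid S_{i,t})$ (current contents); update $p(u)\leftarrow\min\{p(u),\ v(u\mid S_{j,t})/(\beta+\rho_t/B)\}$ and offer $p(u)$ to $u$. If $u$ accepts: if $v(S_{j,t}\cup\{u\})-p(S_{j,t}\cup\{u\})>\rho_t$ (current prices), set $u^*\leftarrow\{u\}$ and end the round immediately; otherwise add $u$ to $S_{j,t}$. If $u$ rejects, remove $u$ from $R$. After the round, stop if $R\setminus\left(\bigcup_{i=1}^{\ell}(S_{i,t-1}\cup S_{i,t})\cup u^*\right)=\emptyset$; otherwise start another round. 4. Let $M$ be the final value of $t$. Output $S^*\in\arg\max_{A\in\{S_{i,t}: i\in[\ell],\ t\in\{M-1,M\}\}\cup\{u^*\}}\big(v(A)-p(A)\big)$, paying each $u\in S^*$ its current price $p(u)$. Notation: $S_{i,t}$ denotes the contents of that candidate set at the end of round $t$; $\rho_M$ is the threshold of the last round; $u^*$ denotes its value at termination (possibly $\emptyset$, with $v(\emptyset)=0$). *)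

(* Mechanism BFM-SWM with ell = 2, modelled as a relation
   describing all valid executions (ties in the argmax are arbitrary). *)
From HB Require Import structures.
From mathcomp Require Import all_boot all_order all_algebra.
Set Implicit Arguments. Unset Strict Implicit. Unset Printing Implicit Defensive.
Import Order.TTheory GRing.Theory Num.Theory.
Local Open Scope ring_scope.

Definition marg (T : finType) (R : numDomainType) (v : {set T} -> R)
  (u : T) (S : {set T}) : R := v (u |: S) - v S.

Definition submodular (T : finType) (R : numDomainType) (v : {set T} -> R) :=
  forall (X Y : {set T}) (u : T), X \subset Y -> u \notin Y ->
    marg v u Y <= marg v u X.

Definition costs (T : finType) (R : numDomainType) (c : T -> R) (X : {set T}) : R :=
  \sum_(x in X) c x.

(* State inside a round: remaining set R, prices p, current S_{1,t}, S_{2,t},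
   u*, and a flag telling whether the round has been ended early. *)
Record rstate (T : finType) (R : realFieldType) := RS {
  rs_R : {set T}; rs_p : T -> R; rs_S1 : {set T}; rs_S2 : {set T};
  rs_us : {set T}; rs_stop : bool }.

Definition sel (T : finType) (R : realFieldType) (j : bool) (s : rstate T R) :=
  if j then rs_S1 s else rs_S2 s.

Definition step_with (T : finType) (R : realFieldType) (v : {set T} -> R)
  (c : T -> R) (B beta rho : R) (j : bool) (u : T) (s : rstate T R) : rstate T R :=
  let Sj := sel j s in
  let pn := Order.min (rs_p s u) (marg v u Sj / (beta + rho / B)) in
  let p' := fun x => if x == u then pn else rs_p s x in
  if c u <= pn then
    if rho < v (u |: Sj) - \sum_(x in u |: Sj) p' x
    then RS (rs_R s) p' (rs_S1 s) (rs_S2 s) [set u] true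
    else if j then RS (rs_R s) p' (u |: rs_S1 s) (rs_S2 s) (rs_us s) false
              else RS (rs_R s) p' (rs_S1 s) (u |: rs_S2 s) (rs_us s) false
  else RS (rs_R s :\ u) p' (rs_S1 s) (rs_S2 s) (rs_us s) false.

Definition step (T : finType) (R : realFieldType) (v : {set T} -> R)
  (c : T -> R) (B beta rho : R) (u : T) (s s' : rstate T R) : Prop :=
  exists j : bool, marg v u (sel (~~ j) s) <= marg v u (sel j s) /\
                   s' = step_with v c B beta rho j u s.

Inductive proc (T : finType) (R : realFieldType) (v : {set T} -> R)
  (c : T -> R) (B beta rho : R) : seq T -> rstate T R -> rstate T R -> Prop :=
| proc_nil s : proc v c B beta rho [::] s s
| proc_ended u l s : rs_stop s = true -> proc v c B beta rho (u :: l) s s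
| proc_cons u l s s1 s2 : rs_stop s = false -> step v c B beta rho u s s1 ->
    proc v c B beta rho l s1 s2 -> proc v c B beta rho (u :: l) s s2.

(* threshold of round t : rho_0 = eps/alpha, rho_t = alpha rho_{t-1} *)
Definition rho_t (R : realFieldType) (alpha eps : R) (t : nat) : R :=
  eps / alpha * alpha ^+ t.

Definition stop_after (T : finType) (Rt S1 S2 us : nat -> {set T}) (t : nat) : bool :=
  Rt t :\: (S1 t.-1 :|: S2 t.-1 :|: S1 t :|: S2 t :|: us t) == set0.

(* A complete execution of BFM-SWM (ell = 2) terminating after round M.
   ord is the fixed processing order; Rt t, pt t, S1 t, S2 t, us t are the
   values of R, p, S_{1,t}, S_{2,t}, u* at the end of round t (t = 0: initial). *)
Definition BFM_SWM2_run (T : finType) (R : realFieldType) (v : {set T} -> R)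
  (c : T -> R) (B alpha beta eps : R) (ord : seq T) (M : nat)
  (Rt : nat -> {set T}) (pt : nat -> T -> R) (S1 S2 us : nat -> {set T}) : Prop :=
  Rt 0%N = [set u | c u <= B] /\ pt 0%N = (fun _ => B) /\
  S1 0%N = set0 /\ S2 0%N = set0 /\ us 0%N = set0 /\
  (1 <= M)%N /\
      (forall t, (1 <= t <= M)%N ->
         exists b,
         proc v c B beta (rho_t alpha eps t)
           [seq u <- ord | u \in Rt t.-1 :\: (S1 t.-1 :|: S2 t.-1 :|: us t.-1)]
           (RS (Rt t.-1) (pt t.-1) set0 set0 (us t.-1) false)
           (RS (Rt t) (pt t) (S1 t) (S2 t) (us t) b)) /\
  (forall t, (1 <= t < M)%N -> ~~ stop_after Rt S1 S2 us t) /\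
  stop_after Rt S1 S2 us M.

(* Within a round every kept seller joins the candidate set on which its
   marginal value is larger, so by submodularity the positive parts of the
   marginals of S_2 over S_1 sum to at most v(S_2), and symmetrically.  A
   seller rejected in round t refused the price v(u | S_j) / K_t with
   K_t = beta + rho_t / B, so its marginal on both candidate sets is at most
   K_t c(u).  Hence every set Q of sellers kept or rejected in round t
   satisfies v(Q ∪ S_i) <= v(S_1) + v(S_2) + K_t c(Q) for i = 1, 2, and
   submodularity applied to Q ∪ S_1 and Q ∪ S_2, which meet in Q, gives
   v(Q) <= 2 (v(S_1) + v(S_2)) + 2 K_t c(Q).  The stopping rule ensures that
   every seller of cost at most B is handled in some round or is u*; summing
   over rounds by subadditivity and bounding K_M c(O) by beta c(O) + rho_M
   (as c(O) <= B) gives the claim. *)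

From HB Require Import structures.
From mathcomp Require Import all_boot all_order all_algebra.
From mathcomp Require Import lra.
Import Order.TTheory GRing.Theory Num.Theory.
Local Open Scope ring_scope.
Set Implicit Arguments. Unset Strict Implicit. Unset Printing Implicit Defensive.

Lemma setU1_ind (T : finType) (P : {set T} -> Prop) :
  P set0 -> (forall (x : T) (D : {set T}), x \notin D -> P D -> P (x |: D)) ->
  forall D, P D.
Proof.
move=> P0 PU1 D; elim: {D}#|D| {-2}D (erefl #|D|) => [|n IHn] D cardD.
  by rewrite (cards0_eq cardD).
have [x Dx] : exists x, x \in D by apply/set0Pn; rewrite -card_gt0 cardD.
rewrite -(setD1K Dx); apply: PU1; first by rewrite !inE eqxx.
by apply: IHn; move: cardD; rewrite (cardsD1 x) Dx => -[].
Qed.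

Lemma disjointsU1 (T : finType) (x : T) (A B : {set T}) :
  [disjoint x |: A & B] = (x \notin B) && [disjoint A & B].
Proof. by rewrite !disjoints_subset subUset sub1set inE. Qed.

Lemma ler_sum_subset (I : finType) (R : numDomainType) (A B : {set I}) (F : I -> R) :
  A \subset B -> {in B, forall i, 0 <= F i} -> \sum_(i in A) F i <= \sum_(i in B) F i.
Proof.
move=> AB F_ge0; rewrite [X in _ <= X](big_setID A) (setIidPr AB) lerDl.
by apply: sumr_ge0 => i; rewrite inE => /andP[_ /F_ge0].
Qed.

Section Submodular.
Variables (T : finType) (R : realDomainType) (v : {set T} -> R).
Hypothesis v_submod : submodular v.

Lemma marg_setU_antimono (D X Y : {set T}) : X \subset Y -> [disjoint D & Y] ->
  v (D :|: Y) - v Y <= v (D :|: X) - v X.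
Proof.
elim/setU1_ind: D => [|x D xD IHD] XY; first by rewrite !set0U !subrr.
rewrite disjointsU1 => /andP[xY DY].
have mx : marg v x (D :|: Y) <= marg v x (D :|: X).
  by apply: v_submod; rewrite ?setUS // !inE negb_or xD.
by move: mx (IHD XY DY); rewrite /marg -!setUA; lra.
Qed.

Lemma marg_setU_le_sum (D Y : {set T}) : [disjoint D & Y] ->
  v (D :|: Y) - v Y <= \sum_(u in D) marg v u Y.
Proof.
elim/setU1_ind: D => [|x D xD IHD]; first by rewrite set0U subrr big_set0.
rewrite disjointsU1 big_setU1 //= => /andP[xY DY].
have mx : marg v x (D :|: Y) <= marg v x Y.
  by apply: v_submod; rewrite ?subsetUr // !inE negb_or xD.
by move: mx (IHD DY); rewrite /marg -!setUA; lra.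
Qed.

Lemma submod_setUI (X Y : {set T}) : v (X :|: Y) + v (X :&: Y) <= v X + v Y.
Proof.
have dYX : [disjoint Y :\: X & X] by rewrite disjoints_subset subsetDr.
have := marg_setU_antimono (subsetIl X Y) dYX.
have -> : Y :\: X :|: X = X :|: Y.
  by apply/setP => z; rewrite !inE; case: (z \in X); rewrite ?orbT ?orbF.
have -> : Y :\: X :|: X :&: Y = Y by rewrite setUC setIC setID.
lra.
Qed.

Hypothesis v_ge0 : forall S, 0 <= v S.

Lemma submod_subadd (X Y : {set T}) : v (X :|: Y) <= v X + v Y.
Proof. by have := v_ge0 (X :&: Y); have := submod_setUI X Y; lra. Qed.

(* The positive part matters: v need not be monotone, and elements of B
   outside the set being bounded are dropped in [setU_le_cross_bounded]. *)
Definition cross_bounded (A B : {set T}) :=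
  \sum_(y in B) Num.max 0 (marg v y A) <= v B.

Definition mutually_bounded (A B : {set T}) :=
  [/\ [disjoint A & B], cross_bounded A B & cross_bounded B A].

Lemma mutually_bounded_sym (A B : {set T}) :
  mutually_bounded A B -> mutually_bounded B A.
Proof. by case=> dAB cAB cBA; split; rewrite 1?disjoint_sym. Qed.

Lemma mutually_bounded0 : v set0 = 0 -> mutually_bounded set0 set0.
Proof.
by move=> v0; split; rewrite ?disjoints_subset ?sub0set // /cross_bounded big_set0 v0.
Qed.

Lemma cross_bounded_setU1l (A B : {set T}) (x : T) :
  x \notin B -> [disjoint A & B] -> cross_bounded A B -> cross_bounded (x |: A) B.
Proof.
move=> xB dAB; apply: le_trans; apply: ler_sum => y yB.
have yxA : y \notin x |: A.
  rewrite !inE negb_or (disjointFl dAB yB) andbT.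
  by apply: contraNneq xB => <-.
by rewrite ge_max le_max lexx /= le_max v_submod ?orbT ?subsetUr.
Qed.

Lemma cross_bounded_setU1r (A B : {set T}) (x : T) :
  x \notin B -> Num.max 0 (marg v x A) <= marg v x B ->
  cross_bounded A B -> cross_bounded A (x |: B).
Proof. by rewrite /cross_bounded /marg => xB; rewrite big_setU1 //=; lra. Qed.

Lemma mutually_bounded_setU1 (A B : {set T}) (x : T) :
  x \notin A :|: B -> marg v x B <= marg v x A -> 0 <= marg v x A ->
  mutually_bounded A B -> mutually_bounded (x |: A) B.
Proof.
rewrite inE negb_or => /andP[xA xB] mBA mA0 [dAB cAB cBA]; split.
- by rewrite disjointsU1 xB.
- exact: cross_bounded_setU1l.
- by apply: cross_bounded_setU1r; rewrite ?ge_max ?mA0.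
Qed.

Variable c : T -> R.
Hypothesis c_ge0 : forall u, 0 <= c u.

Lemma setU_le_cross_bounded (A B D Q : {set T}) (K : R) :
  0 <= K -> cross_bounded A B -> {in D, forall u, marg v u A <= K * c u} ->
  Q \subset A :|: B :|: D -> v (Q :|: A) <= v A + v B + K * costs c Q.
Proof.
move=> K_ge0 cAB domD QABD.
have dQA : [disjoint Q :\: A & A] by rewrite disjoints_subset subsetDr.
have := marg_setU_le_sum dQA.
have -> : Q :\: A :|: A = Q :|: A.
  by apply/setP => z; rewrite !inE; case: (z \in A); rewrite ?orbT ?orbF.
rewrite (big_setID B) /=.
have inB : \sum_(u in (Q :\: A) :&: B) marg v u A <= v B.
  apply: le_trans cAB.
  apply: (@le_trans _ _ (\sum_(u in (Q :\: A) :&: B) Num.max 0 (marg v u A))).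
    by apply: ler_sum => u _; rewrite le_max lexx orbT.
  by apply: ler_sum_subset => [|u _]; [exact: subsetIr | rewrite le_max lexx].
have inD : \sum_(u in Q :\: A :\: B) marg v u A <= K * costs c Q.
  rewrite /costs mulr_sumr.
  apply: (@le_trans _ _ (\sum_(u in Q :\: A :\: B) K * c u)).
    apply: ler_sum => u; rewrite !inE => /andP[uB /andP[uA uQ]]; apply: domD.
    by move: (subsetP QABD u uQ); rewrite !inE (negbTE uA) (negbTE uB).
  apply: ler_sum_subset => [|u _]; last by rewrite mulr_ge0.
  by rewrite setDE subIset // subsetDl.
lra.
Qed.

Lemma mutually_bounded_value_le (S1 S2 D Q : {set T}) (K : R) :
  0 <= K -> mutually_bounded S1 S2 ->
  {in D, forall u, marg v u S1 <= K * c u /\ marg v u S2 <= K * c u} ->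
  Q \subset S1 :|: S2 :|: D -> v Q <= 2 * (v S1 + v S2) + 2 * K * costs c Q.
Proof.
move=> K_ge0 [dS cS12 cS21] domD QS.
have le1 := setU_le_cross_bounded K_ge0 cS12 (fun u Du => (domD u Du).1) QS.
have QS' : Q \subset S2 :|: S1 :|: D by rewrite (setUC S2).
have le2 := setU_le_cross_bounded K_ge0 cS21 (fun u Du => (domD u Du).2) QS'.
have capQ : (Q :|: S1) :&: (Q :|: S2) = Q by rewrite -setUIr disjoint_setI0 ?setU0.
have := submod_setUI (Q :|: S1) (Q :|: S2); rewrite capQ.
by have := v_ge0 ((Q :|: S1) :|: (Q :|: S2)); lra.
Qed.

Lemma value_le_bigcup (G : nat -> {set T}) (b : nat -> R) (K : R) (k : nat) :
  v set0 = 0 ->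
  (forall t, (0 < t <= k)%N -> forall Q : {set T},
     Q \subset G t -> v Q <= b t + K * costs c Q) ->
  forall X : {set T}, X \subset \bigcup_(1 <= t < k.+1) G t ->
    v X <= \sum_(1 <= t < k.+1) b t + K * costs c X.
Proof.
move=> v0; elim: k => [|k IHk] bG X.
  rewrite !big_geq // subset0 => /eqP ->.
  by rewrite v0 /costs big_set0 mulr0 addr0.
rewrite !(big_nat_recr k.+1) //=; set U := \bigcup_(1 <= t < k.+1) G t => XUG.
have le_I : v (X :&: U) <= \sum_(1 <= t < k.+1) b t + K * costs c (X :&: U).
  apply: IHk; last exact: subsetIr.
  by move=> t /andP[t0 tk]; apply: bG; rewrite t0 leqW.
have le_D : v (X :\: U) <= b k.+1 + K * costs c (X :\: U).
  by apply: bG; rewrite ?ltnSn // subDset.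
have := submod_subadd (X :&: U) (X :\: U); rewrite setID.
have -> : costs c X = costs c (X :&: U) + costs c (X :\: U) by apply: big_setID.
by rewrite mulrDr; lra.
Qed.

End Submodular.

Lemma accept_marg_ge0 (R : realFieldType) (K p m x : R) :
  0 < K -> 0 <= x -> x <= Num.min p (m / K) -> 0 <= m.
Proof.
move=> K_gt0 x_ge0; rewrite le_min => /andP[_ xmK].
by move: (le_trans x_ge0 xmK); rewrite pmulr_lge0 // invr_gt0.
Qed.

Lemma reject_marg_le (R : realFieldType) (K p m x : R) :
  0 < K -> x <= p -> ~~ (x <= Num.min p (m / K)) -> m <= K * x.
Proof.
move=> K_gt0 xp; rewrite le_min xp /= -ltNge ltr_pdivrMr // mulrC.
exact: ltW.
Qed.

Section Round.
Variables (T : finType) (R : realFieldType) (v : {set T} -> R) (c : T -> R).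
Hypothesis v_submod : submodular v.

(* R0 is the remaining set at the start of the round, so [R0 :\: Rs] are the
   sellers rejected so far in the round. *)
Definition round_inv (K : R) (R0 Rs : {set T}) (p : T -> R) (S1 S2 us : {set T}) :=
  [/\ mutually_bounded v S1 S2,
      {in R0 :\: Rs, forall u,
         [/\ u \notin S1 :|: S2, marg v u S1 <= K * c u & marg v u S2 <= K * c u]},
      {in Rs, forall y, c y <= p y} &
      (#|us| <= 1)%N].

Lemma round_inv_sym (K : R) (R0 Rs : {set T}) (p : T -> R) (S1 S2 us : {set T}) :
  round_inv K R0 Rs p S1 S2 us -> round_inv K R0 Rs p S2 S1 us.
Proof.
case=> mS rej pr us1; split=> // [|u /rej[]]; first exact: mutually_bounded_sym.
by rewrite setUC.
Qed.

Lemma round_inv_setU1 (K : R) (R0 Rs : {set T}) (p : T -> R) (S1 S2 us : {set T})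
  (x : T) :
  x \in Rs -> x \notin S1 :|: S2 -> marg v x S2 <= marg v x S1 -> 0 <= marg v x S1 ->
  round_inv K R0 Rs p S1 S2 us -> round_inv K R0 Rs p (x |: S1) S2 us.
Proof.
move=> xR xS mx mx0 [mS rej pr us1]; split=> //; first exact: mutually_bounded_setU1.
move=> u uR; have [uS m1 m2] := rej u uR.
have ux : u != x by apply: contraTneq uR => ->; rewrite inE xR.
have [uS1 uS2] : u \notin S1 /\ u \notin S2 by apply/norP; rewrite -in_setU.
have uxS1 : u \notin x |: S1 by rewrite !inE negb_or ux.
split=> //; first by rewrite in_setU negb_or uxS1.
by apply: le_trans m1; apply: v_submod; rewrite ?subsetUr.
Qed.

Definition state_inv (K : R) (R0 : {set T}) (s : rstate T R) :=
  round_inv K R0 (rs_R s) (rs_p s) (rs_S1 s) (rs_S2 s) (rs_us s).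

Definition pending (s : rstate T R) (y : T) := y \in rs_R s :\: (rs_S1 s :|: rs_S2 s).

Variables (B beta rho : R).
Hypothesis c_ge0 : forall u, 0 <= c u.
Hypothesis K_gt0 : 0 < beta + rho / B.
Local Notation K := (beta + rho / B).

Lemma step_with_inv (R0 : {set T}) (j : bool) (x : T) (s : rstate T R) :
  pending s x -> marg v x (sel (~~ j) s) <= marg v x (sel j s) ->
  state_inv K R0 s -> state_inv K R0 (step_with v c B beta rho j x s).
Proof.
case: s => Rs p S1 S2 us b; rewrite /pending /state_inv /step_with /=.
move=> /setDP[xR xS] hj [mS rej pr us1].
set pn := Order.min _ _; set p' := fun y => if y == x then pn else p y.
have pr_off : {in Rs :\ x, forall y, c y <= p' y}.
  by move=> y; rewrite !inE /p' => /andP[/negbTE-> /pr].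
case: ifP => acc.
  have pr' : {in Rs, forall y, c y <= p' y}.
    move=> y yR; have [-> | yx] := eqVneq y x; first by rewrite /p' eqxx.
    by apply: pr_off; rewrite !inE yx.
  have inv' : round_inv K R0 Rs p' S1 S2 us by [].
  have mx0 := accept_marg_ge0 K_gt0 (c_ge0 x) acc.
  case: ifP => _ /=; first by split=> //; rewrite cards1.
  clearbody p' pn; case: j hj mx0 => /= hj mx0; first exact: round_inv_setU1.
  by apply/round_inv_sym/round_inv_setU1/round_inv_sym; rewrite // setUC.
have mx := reject_marg_le K_gt0 (pr x xR) (negbT acc).
clearbody p' pn.
have [m1 m2] : marg v x S1 <= K * c x /\ marg v x S2 <= K * c x.
  by case: j hj mx => /= hj mx; split=> //; apply: le_trans mx.
split=> //= u; rewrite setDDr in_setU => /orP[/rej // | ].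
by rewrite inE => /andP[_ /set1P->].
Qed.

Lemma step_with_pending (j : bool) (x y : T) (s : rstate T R) :
  y != x -> pending s y -> pending (step_with v c B beta rho j x s) y.
Proof.
case: s => Rs p S1 S2 us b; rewrite /pending /step_with /= => yx.
case: ifP => _; [case: ifP => _; [| case: j] |];
  by rewrite /= !inE ?(negbTE yx) //= => ->.
Qed.

Lemma proc_state_inv (R0 : {set T}) (l : seq T) (s s' : rstate T R) :
  proc v c B beta rho l s s' -> uniq l -> {in l, forall y, pending s y} ->
  state_inv K R0 s -> state_inv K R0 s'.
Proof.
elim=> // x {}l {}s s1 s2 _ [j [hj ->]] _ IH /andP[xl l_uniq] l_pend inv.
apply: IH => // [y yl | ].
  apply: step_with_pending; first by apply: contraNneq xl => <-.
  by apply: l_pend; rewrite inE yl orbT.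
by apply: step_with_inv => //; apply: l_pend; rewrite mem_head.
Qed.

End Round.

Lemma bigcup_nat_sup (T : finType) (G : nat -> {set T}) (m n t : nat) :
  (m <= t < n)%N -> G t \subset \bigcup_(m <= i < n) G i.
Proof.
by move=> tmn; rewrite (bigD1_seq t) ?mem_index_iota ?iota_uniq //= subsetUl.
Qed.

Lemma setD_sub_bigcup_nat (T : finType) (A G : nat -> {set T}) (k : nat) :
  (forall t, (0 < t <= k)%N -> A t.-1 :\: A t \subset G t) ->
  A 0%N :\: A k \subset \bigcup_(1 <= t < k.+1) G t.
Proof.
elim: k => [|k IHk] AG; first by rewrite setDv sub0set.
rewrite big_nat_recr //=; apply/subsetP => u /setDP[u0 uk1].
rewrite in_setU; have [uk | uk] := boolP (u \in A k).
  by rewrite (subsetP (AG k.+1 _)) ?orbT //= inE uk uk1.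
apply/orP; left; apply: (subsetP (IHk _)); last by rewrite inE uk u0.
by move=> t /andP[t0 tk]; apply: AG; rewrite t0 leqW.
Qed.

Lemma value_sub_le_card1 (T : finType) (R : numDomainType) (v : {set T} -> R)
  (A B : {set T}) :
  v set0 = 0 -> 0 <= v B -> A \subset B -> (#|B| <= 1)%N -> v A <= v B.
Proof.
move=> v0 vB0 AB B1; have [A0 | A1] := eqVneq #|A| 0%N.
  by rewrite (cards0_eq A0) v0.
suff /eqP-> : A == B by [].
rewrite -(subset_leqif_cards AB).2 eqn_leq subset_leq_card //.
by rewrite (leq_trans B1) // lt0n.
Qed.

Lemma rho_t_gt0 (R : realFieldType) (alpha eps : R) (t : nat) :
  0 < alpha -> 0 < eps -> 0 < rho_t alpha eps t.
Proof. by move=> a0 e0; rewrite /rho_t mulr_gt0 ?divr_gt0 ?exprn_gt0. Qed.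

Lemma rho_t_homo (R : realFieldType) (alpha eps : R) :
  1 <= alpha -> 0 <= eps -> {homo rho_t alpha eps : s t / (s <= t)%N >-> s <= t}.
Proof.
move=> a1 e0 s t st; rewrite /rho_t ler_wpM2l ?ler_weXn2l //.
by rewrite divr_ge0 // (le_trans ler01).
Qed.

Lemma threshold_cost_le (R : realFieldType) (B beta rho x y : R) :
  0 < B -> 0 <= beta -> 0 <= rho -> 0 <= x -> x <= y -> y <= B ->
  (beta + rho / B) * x <= beta * y + rho.
Proof.
move=> B0 beta0 rho0 x0 xy yB; rewrite mulrDl lerD ?ler_wpM2l //.
by rewrite mulrAC ler_pdivrMr // ler_wpM2l // (le_trans xy).
Qed.

Section Run.
Variables (T : finType) (R : realFieldType) (v : {set T} -> R) (c : T -> R).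
Variables (B alpha beta eps : R) (ord : seq T) (M : nat).
Variables (Rt : nat -> {set T}) (pt : nat -> T -> R) (S1 S2 us : nat -> {set T}).
Hypotheses (v0 : v set0 = 0) (v_ge0 : forall S, 0 <= v S) (v_submod : submodular v).
Hypotheses (c_ge0 : forall u, 0 <= c u) (B_gt0 : 0 < B).
Hypotheses (alpha_gt1 : 1 < alpha) (beta_gt1 : 1 < beta) (eps_gt0 : 0 < eps).
Hypothesis ord_uniq : uniq ord.
Hypothesis run : BFM_SWM2_run v c B alpha beta eps ord M Rt pt S1 S2 us.

Local Notation K t := (beta + rho_t alpha eps t / B).

Lemma K_gt0 (t : nat) : 0 < K t.
Proof. by rewrite addr_gt0 ?divr_gt0 ?rho_t_gt0 // (lt_trans ltr01). Qed.

Lemma K_homo : {homo (fun t => K t) : s t / (s <= t)%N >-> s <= t}.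
Proof.
move=> s t st; rewrite lerD2l ler_wpM2r ?invr_ge0 ?(ltW B_gt0) //.
by rewrite rho_t_homo ?(ltW alpha_gt1) ?(ltW eps_gt0).
Qed.

Lemma run_round_inv (t : nat) : (0 < t <= M)%N ->
  round_inv v c (K t) (Rt t.-1) (Rt t) (pt t) (S1 t) (S2 t) (us t).
Proof.
have [R0E [p0E [_ [_ [us0 [_ [rounds _]]]]]]] := run.
elim: t => // t IHt /andP[_ tM].
have start : round_inv v c (K t.+1) (Rt t) (Rt t) (pt t) set0 set0 (us t).
  split; [exact: mutually_bounded0 | by move=> u; rewrite setDv inE | |].
  - case: t IHt tM => [_ _ | t IHt tM]; first by move=> y; rewrite R0E p0E inE.
    by have [] := IHt (ltnW tM).
  - case: t IHt tM => [_ _ | t IHt tM]; first by rewrite us0 cards0.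
    by have [] := IHt (ltnW tM).
have [b round] := rounds t.+1 tM.
apply: (proc_state_inv v_submod c_ge0 (K_gt0 t.+1) round); rewrite ?filter_uniq //.
by move=> y; rewrite mem_filter /pending !inE => /andP[/andP[_ ->]].
Qed.

Definition handled (t : nat) := S1 t :|: S2 t :|: (Rt t.-1 :\: Rt t).

Lemma handled_value_le (t : nat) : (0 < t <= M)%N -> forall Q : {set T},
  Q \subset handled t -> v Q <= 2 * (v (S1 t) + v (S2 t)) + 2 * K M * costs c Q.
Proof.
move=> tM Q Qh; have [mS rej _ _] := run_round_inv tM.
have domD : {in Rt t.-1 :\: Rt t, forall u,
    marg v u (S1 t) <= K t * c u /\ marg v u (S2 t) <= K t * c u}.
  by move=> u /rej[].
have K_ge0 := ltW (K_gt0 t).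
apply: le_trans (mutually_bounded_value_le v_submod v_ge0 c_ge0 K_ge0 mS domD Qh) _.
rewrite lerD2l ler_wpM2r ?ler_wpM2l ?K_homo //; last by case/andP: tM.
by apply: sumr_ge0 => u _.
Qed.

Lemma budget_feasible_sub_handled (O : {set T}) : costs c O <= B ->
  O \subset \bigcup_(1 <= t < M.+1) handled t :|: us M.
Proof.
have [R0E [_ [S10 [S20 [_ [M_gt0 [_ [_ stop]]]]]]]] := run.
set U := \bigcup_(1 <= t < M.+1) handled t => cO.
have O_sub : O \subset Rt 0.
  apply/subsetP => u uO; rewrite R0E inE (le_trans _ cO) //.
  have -> : c u = costs c [set u] by rewrite /costs big_set1.
  by rewrite ler_sum_subset ?sub1set.
have S_sub t : (t <= M)%N -> S1 t :|: S2 t \subset U.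
  case: t => [_ | t tM]; first by rewrite S10 S20 setU0 sub0set.
  exact: subset_trans (subsetUl _ _) (bigcup_nat_sup _ _).
have drop_sub : Rt 0 :\: Rt M \subset U.
  by apply: setD_sub_bigcup_nat => t _; apply: subsetUr.
have final_sub : S1 M.-1 :|: S2 M.-1 :|: S1 M :|: S2 M :|: us M \subset U :|: us M.
  by rewrite setUSS // -setUA subUset !S_sub ?leq_pred.
apply/subsetP => u /(subsetP O_sub) u0.
have [uM | uM] := boolP (u \in Rt M); last by rewrite inE (subsetP drop_sub) // inE uM.
apply: (subsetP final_sub); apply: contraT => un.
by rewrite -(in_set0 u) -(eqP stop) inE un.
Qed.

Lemma run_value_bound (O : {set T}) : costs c O <= B ->
  v O - 2 * beta * costs c O <=
    2 * rho_t alpha eps M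
    + 2 * (\sum_(1 <= t < M.+1) (v (S1 t) + v (S2 t)))
    + 2 * v (us M).
Proof.
move=> cO; set U := \bigcup_(1 <= t < M.+1) handled t.
have M_gt0 : (0 < M)%N by case: run => [_ [_ [_ [_ [_ [->]]]]]].
have le_OU := value_le_bigcup v_submod v_ge0 v0 handled_value_le (subsetIr O U).
have le_us : v (O :\: U) <= v (us M).
  apply: value_sub_le_card1 => //.
    by rewrite subDset budget_feasible_sub_handled.
  by case: (run_round_inv (t := M)); rewrite ?M_gt0 ?leqnn.
have le_cost : K M * costs c (O :&: U) <= beta * costs c O + rho_t alpha eps M.
  have rho_ge0 : 0 <= rho_t alpha eps M by rewrite ltW // rho_t_gt0 // (lt_trans ltr01).
  apply: threshold_cost_le => //; first by rewrite ltW ?(lt_trans ltr01).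
    by apply: sumr_ge0 => u _.
  by apply: ler_sum_subset; rewrite ?subsetIl.
have := submod_subadd v_submod v_ge0 (O :&: U) (O :\: U); rewrite setID.
rewrite -mulr_sumr -mulrA in le_OU.
by have := v_ge0 (us M); lra.
Qed.

End Run.

Unset Implicit Arguments. Set Strict Implicit.

Theorem lemma4p3 (T : finType) (R : realFieldType) (v : {set T} -> R) (c : T -> R)
  (B alpha beta eps : R) (ord : seq T)
  (M : nat) (Rt : nat -> {set T}) (pt : nat -> T -> R) (S1 S2 us : nat -> {set T})
  (O : {set T}) :
  v set0 = 0 -> (forall S, 0 <= v S) -> submodular v ->
  (forall u, 0 <= c u) ->
  0 < B -> 1 < alpha -> 1 < beta -> 0 < eps ->
  uniq ord -> (forall u, u \in ord) ->
  BFM_SWM2_run v c B alpha beta eps ord M Rt pt S1 S2 us ->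
  costs c O <= B ->
  (forall S : {set T}, costs c S <= B -> v S - costs c S <= v O - costs c O) ->
  v O - 2 * beta * costs c O <=
    2 * rho_t alpha eps M
    + 2 * (\sum_(1 <= t < M.+1) (v (S1 t) + v (S2 t)))
    + 2 * v (us M).
Proof.
(* Sellers missing from [ord] are never processed and would violate the
   stopping rule. *)
move=> v0 v_ge0 v_submod c_ge0 B_gt0 alpha_gt1 beta_gt1 eps_gt0 ord_uniq _ run cO _.
exact: (run_value_bound v0 v_ge0 v_submod c_ge0 B_gt0 alpha_gt1 beta_gt1 eps_gt0
  ord_uniq run cO).
Qed.
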